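(* Let $x_0<x_1<\cdots<x_6$ be real numbers and write $d_{i,j}=x_j-x_i$ for $i<j$. Let $y_0,\ldots,y_6$ be real numbers such that, for some $\epsilon>0$, (1) $-d_{1,2}y_0+d_{0,2}y_1-d_{0,1}y_2\ge\epsilon$, (2) $d_{3,4}y_0-d_{0,4}y_3+d_{0,3}y_4\ge\epsilon$, (3) $-d_{3,5}y_1+d_{1,5}y_3-d_{1,3}y_5\ge\epsilon$, (4) $d_{3,6}y_2-d_{2,6}y_3+d_{2,3}y_6\ge\epsilon$, (5) $d_{5,6}y_3-d_{3,6}y_5+d_{3,5}y_6\ge\epsilon$, (6) $-d_{5,6}y_4+d_{4,6}y_5-d_{4,5}y_6\ge\epsilon$. (Equivalently, with $p_i=(x_i,y_i)$: $p_1$ is strictly above $\overline{p_0p_2}$, $p_3$ is strictly below $\overline{p_0p_4}$, $p_3$ is strictly above $\overline{p_1p_5}$, $p_3$ is strictly below $\overline{p_2p_6}$, $p_5$ is strictly below $\overline{p_3p_6}$, and $p_5$ is strictly above $\overline{p_4p_6}$.) Then the visibility graph of the terrain with points $p_i=(x_i,y_i)$, $i=0,\ldots,6$, is $G'$.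
   Context: A terrain is an $x$-monotone polygonal chain with points $p_0,\ldots,p_{n-1}$ listed left to right (strictly increasing $x$-coordinates), consecutive points joined by segments. Points $p_i,p_j$ ($i<j$) see each other iff the open segment $\overline{p_ip_j}$ lies strictly above the terrain, i.e. iff $j=i+1$ or every $p_k$ with $i<k<j$ lies strictly below $\overline{p_ip_j}$. The visibility graph has vertex $v_i$ for $p_i$ and edge $\{v_i,v_j\}$ iff $p_i,p_j$ see each other. $G'$ is the graph on $v_0,\ldots,v_6$ with edge set $\{v_0v_1,v_0v_3,v_0v_4,v_0v_5,v_0v_6,v_1v_2,v_1v_3,v_1v_6,v_2v_3,v_2v_6,v_3v_4,v_3v_5,v_3v_6,v_4v_5,v_5v_6\}$. *)

From mathcomp Require Import all_boot all_order all_algebra.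
Set Implicit Arguments. Unset Strict Implicit. Unset Printing Implicit Defensive.
Import Order.TTheory GRing.Theory Num.Theory.
Local Open Scope ring_scope.

(* Terrain with points p_k = (x k, y k), k = 0 .. n-1 (only indices < n matter). *)

Definition strictly_below (R : realFieldType) (x y : nat -> R) (i j k : nat) : Prop :=
  y k < y i + (x k - x i) / (x j - x i) * (y j - y i).

Definition sees (R : realFieldType) (x y : nat -> R) (i j : nat) : Prop :=
  j = i.+1 \/ (forall k : nat, (i < k)%N -> (k < j)%N -> strictly_below x y i j k).

Definition vis_edge (R : realFieldType) (n : nat) (x y : nat -> R) (i j : nat) : Prop :=
  [/\ (i < n)%N, (j < n)%N &
      (((i < j)%N /\ sees x y i j) \/ ((j < i)%N /\ sees x y j i))].

Definition Gprime_edges : seq (nat * nat) :=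
  [:: (0,1); (0,3); (0,4); (0,5); (0,6); (1,2); (1,3); (1,6); (2,3); (2,6);
      (3,4); (3,5); (3,6); (4,5); (5,6)]%N.

Definition Gprime_edge (i j : nat) : bool :=
  ((i, j) \in Gprime_edges) || ((j, i) \in Gprime_edges).

Definition dx (R : realFieldType) (x : nat -> R) (i j : nat) : R := x j - x i.
Arguments dx {R} x (i j)%_N.

(* The point p_k lies strictly below the chord p_i p_j (x_i < x_k < x_j) iff the
   orientation determinant of (p_i, p_k, p_j) is positive.  For four points with
   increasing abscissae, each orientation determinant of a triple is a positive
   combination of two others, so the six prescribed signs propagate to the signs
   of 31 of the 35 triples.  These signs decide every pair: the edges of G' have
   all intermediate points below the chord, and each non-edge is blocked by
   p_1, p_3 or p_5. *)
From mathcomp Require Import all_boot all_order all_algebra.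
From mathcomp Require Import zify ring lra.
Import Order.TTheory GRing.Theory Num.Theory.
Set Implicit Arguments. Unset Strict Implicit. Unset Printing Implicit Defensive.
Local Open Scope ring_scope.

(* det [1 x_a y_a; 1 x_b y_b; 1 x_c y_c], twice the signed area of p_a p_b p_c. *)
Definition orient (R : realFieldType) (x y : nat -> R) (a b c : nat) : R :=
  dx x b c * y a - dx x a c * y b + dx x a b * y c.

Definition orient_gt0 (R : realFieldType) (x y : nat -> R) (t : nat * nat * nat) : bool :=
  let: (a, b, c) := t in 0 < orient x y a b c.

Definition orient_lt0 (R : realFieldType) (x y : nat -> R) (t : nat * nat * nat) : bool :=
  let: (a, b, c) := t in orient x y a b c < 0.

Definition pos_comb (R : realFieldType) (m l r : R) : Prop :=
  exists d e f : R, [/\ 0 < d, 0 < e, 0 < f & d * m = e * l + f * r].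

Section PositiveCombination.
Variable R : realFieldType.
Implicit Types m l r : R.

Lemma pos_comb_gt0 m l r : pos_comb m l r -> 0 < l -> 0 < r -> 0 < m.
Proof. by case=> d [e [f [? ? ? ?]]] ? ?; nra. Qed.

Lemma pos_comb_l_gt0 m l r : pos_comb m l r -> 0 < m -> r < 0 -> 0 < l.
Proof. by case=> d [e [f [? ? ? ?]]] ? ?; nra. Qed.

Lemma pos_comb_l_lt0 m l r : pos_comb m l r -> m < 0 -> 0 < r -> l < 0.
Proof. by case=> d [e [f [? ? ? ?]]] ? ?; nra. Qed.

Lemma pos_comb_r_gt0 m l r : pos_comb m l r -> 0 < m -> l < 0 -> 0 < r.
Proof. by case=> d [e [f [? ? ? ?]]] ? ?; nra. Qed.

Lemma pos_comb_r_lt0 m l r : pos_comb m l r -> m < 0 -> 0 < l -> r < 0.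
Proof. by case=> d [e [f [? ? ? ?]]] ? ?; nra. Qed.

End PositiveCombination.

Section Terrain.
Variables (R : realFieldType) (n : nat) (x y : nat -> R).
Hypothesis x_incr : forall i j : nat, (i < j)%N -> (j < n)%N -> x i < x j.

Lemma dx_gt0 i j : (i < j)%N -> (j < n)%N -> 0 < dx x i j.
Proof. by move=> ij jn; rewrite subr_gt0 x_incr. Qed.

Section FourPoints.
Variables a b c d : nat.
Hypothesis abcd : [&& a < b, b < c, c < d & d < n]%N.

Let dx_ab : 0 < dx x a b. Proof. by apply: dx_gt0; lia. Qed.
Let dx_ac : 0 < dx x a c. Proof. by apply: dx_gt0; lia. Qed.
Let dx_ad : 0 < dx x a d. Proof. by apply: dx_gt0; lia. Qed.
Let dx_bc : 0 < dx x b c. Proof. by apply: dx_gt0; lia. Qed.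
Let dx_bd : 0 < dx x b d. Proof. by apply: dx_gt0; lia. Qed.
Let dx_cd : 0 < dx x c d. Proof. by apply: dx_gt0; lia. Qed.

(* Grassmann-Pluecker relations, e.g. d_ac [abd] = d_ad [abc] + d_ab [acd]. *)
Lemma comb_abd_abc_acd :
  pos_comb (orient x y a b d) (orient x y a b c) (orient x y a c d).
Proof. by exists (dx x a c), (dx x a d), (dx x a b); split=> //; rewrite /orient /dx; ring. Qed.

Lemma comb_abd_abc_bcd :
  pos_comb (orient x y a b d) (orient x y a b c) (orient x y b c d).
Proof. by exists (dx x b c), (dx x b d), (dx x a b); split=> //; rewrite /orient /dx; ring. Qed.

Lemma comb_acd_abc_bcd :
  pos_comb (orient x y a c d) (orient x y a b c) (orient x y b c d).
Proof. by exists (dx x b c), (dx x c d), (dx x a c); split=> //; rewrite /orient /dx; ring. Qed.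

Lemma comb_acd_abd_bcd :
  pos_comb (orient x y a c d) (orient x y a b d) (orient x y b c d).
Proof. by exists (dx x b d), (dx x c d), (dx x a d); split=> //; rewrite /orient /dx; ring. Qed.

End FourPoints.

Lemma strictly_belowE i j k :
  x i < x j -> strictly_below x y i j k <-> 0 < orient x y i k j.
Proof.
move=> xij; have dij : x j - x i != 0 by rewrite subr_eq0 gt_eqF.
rewrite /strictly_below -subr_gt0.
have -> : y i + (x k - x i) / (x j - x i) * (y j - y i) - y k
    = orient x y i k j / (x j - x i) by rewrite /orient /dx; field.
by rewrite pmulr_lgt0 // invr_gt0 subr_gt0.
Qed.

Lemma seesE i j : (i < j)%N -> (j < n)%N ->
  sees x y i j <-> j = i.+1 \/ (forall k, (i < k)%N -> (k < j)%N -> 0 < orient x y i k j).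
Proof.
move=> ij jn; have xij := x_incr ij jn; rewrite /sees.
split=> -[->|below]; [by left|right|by left|right] => k ik kj;
  exact/(strictly_belowE k xij)/below.
Qed.

Definition certified_visible (pos : seq (nat * nat * nat)) (i j : nat) : bool :=
  (j == i.+1) || all (fun k => (i, k, j) \in pos) (index_iota i.+1 j).

Definition certified_hidden (neg : seq (nat * nat * nat)) (i j : nat) : bool :=
  (j != i.+1) && has (fun k => (i, k, j) \in neg) (index_iota i.+1 j).

Definition graph_certificate (E : nat -> nat -> bool) (pos neg : seq (nat * nat * nat))
    : bool :=
  all (fun i => all (fun j =>
    if (i < j)%N then
      if E i j then certified_visible pos i j else certified_hidden neg i j
    else E i j == (j < i)%N && E j i) (iota 0 n)) (iota 0 n).

Section Certificate.
Variables (E : nat -> nat -> bool) (pos neg : seq (nat * nat * nat)).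
Hypotheses (pos_gt0 : all (orient_gt0 x y) pos) (neg_lt0 : all (orient_lt0 x y) neg).
Hypothesis cert : graph_certificate E pos neg.

Lemma certified_visibleP i j : (i < j)%N -> (j < n)%N ->
  certified_visible pos i j -> sees x y i j.
Proof.
move=> ij jn; rewrite seesE // => /orP[/eqP-> | /allP below]; [by left | right].
move=> k ik kj; apply: (allP pos_gt0 (i, k, j)).
by apply: below; rewrite mem_index_iota ik.
Qed.

Lemma certified_hiddenP i j : (i < j)%N -> (j < n)%N ->
  certified_hidden neg i j -> ~ sees x y i j.
Proof.
move=> ij jn /andP[/eqP nij /hasP[k]]; rewrite mem_index_iota => /andP[ik kj].
move/(allP neg_lt0) => /= blocking; rewrite seesE // => -[//|/(_ k ik kj)].
by rewrite (lt_gtF blocking).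
Qed.

Lemma certificate_entry i j : (i < n)%N -> (j < n)%N ->
  if (i < j)%N then
    if E i j then certified_visible pos i j else certified_hidden neg i j
  else E i j == (j < i)%N && E j i.
Proof.
move=> iN jN; have in_iota k : (k < n)%N -> k \in iota 0 n by rewrite mem_iota.
exact: allP (allP cert i (in_iota i iN)) j (in_iota j jN).
Qed.

Lemma sees_certified i j : (i < j)%N -> (j < n)%N -> sees x y i j <-> E i j.
Proof.
move=> ij jn; have := certificate_entry (ltn_trans ij jn) jn; rewrite ij.
case: (E i j) => entry; first by split=> // _; apply: certified_visibleP.
by split=> // /(certified_hiddenP ij jn entry).
Qed.

Lemma vis_edge_certified i j : (i < n)%N -> (j < n)%N -> vis_edge n x y i j <-> E i j.
Proof.
move=> iN jN; rewrite /vis_edge; have := certificate_entry iN jN.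
case: (ltngtP i j) => [ij _ | ji /eqP-> | <- /eqP->] /=.
- split=> [[_ _ [[_ /(sees_certified ij jN)] | []]] // | ?].
  by split=> //; left; split=> //; apply/sees_certified.
- split=> [[_ _ [[] | [_ /(sees_certified ji iN)]]] // | ?].
  by split=> //; right; split=> //; apply/sees_certified.
- by split=> // -[_ _ [[] | []]].
Qed.

End Certificate.
End Terrain.

Definition Gprime_pos : seq (nat * nat * nat) :=
  [:: (0, 1, 3); (0, 2, 3); (0, 1, 4); (0, 2, 4); (0, 3, 4);
      (0, 1, 5); (0, 2, 5); (0, 3, 5); (0, 4, 5);
      (0, 1, 6); (0, 2, 6); (0, 3, 6); (0, 4, 6); (0, 5, 6);
      (1, 2, 3); (1, 2, 6); (1, 3, 6); (1, 4, 6); (1, 5, 6);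
      (2, 3, 6); (2, 4, 6); (2, 5, 6); (3, 4, 5); (3, 4, 6); (3, 5, 6)]%N.

Definition Gprime_neg : seq (nat * nat * nat) :=
  [:: (0, 1, 2); (1, 3, 4); (1, 3, 5); (2, 3, 4); (2, 3, 5); (4, 5, 6)]%N.

Lemma Gprime_certificate : graph_certificate 7 Gprime_edge Gprime_pos Gprime_neg.
Proof. by []. Qed.

Section Gprime.
Variables (R : realFieldType) (x y : nat -> R).
Hypothesis x_incr : forall i j : nat, (i < j)%N -> (j < 7)%N -> x i < x j.
Hypotheses (n012 : orient x y 0 1 2 < 0) (p034 : 0 < orient x y 0 3 4)
  (n135 : orient x y 1 3 5 < 0) (p236 : 0 < orient x y 2 3 6)
  (p356 : 0 < orient x y 3 5 6) (n456 : orient x y 4 5 6 < 0).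

Lemma Gprime_orient_signs :
  all (orient_gt0 x y) Gprime_pos /\ all (orient_lt0 x y) Gprime_neg.
Proof.
have c1 := @comb_abd_abc_acd R 7 x y x_incr; have c2 := @comb_abd_abc_bcd R 7 x y x_incr.
have c3 := @comb_acd_abc_bcd R 7 x y x_incr; have c4 := @comb_acd_abd_bcd R 7 x y x_incr.
have p346 := pos_comb_l_gt0 (c4 3 4 5 6 isT) p356 n456.
have p345 := pos_comb_l_gt0 (c3 3 4 5 6 isT) p356 n456.
have p256 := pos_comb_gt0 (c4 2 3 5 6 isT) p236 p356.
have p246 := pos_comb_gt0 (c4 2 3 4 6 isT) p236 p346.
have n134 := pos_comb_l_lt0 (c2 1 3 4 5 isT) n135 p345.
have p013 := pos_comb_l_gt0 (c3 0 1 3 4 isT) p034 n134.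
have p014 := pos_comb_l_gt0 (c4 0 1 3 4 isT) p034 n134.
have p023 := pos_comb_r_gt0 (c1 0 1 2 3 isT) p013 n012.
have p123 := pos_comb_r_gt0 (c2 0 1 2 3 isT) p013 n012.
have n234 := pos_comb_r_lt0 (c3 1 2 3 4 isT) n134 p123.
have n235 := pos_comb_r_lt0 (c3 1 2 3 5 isT) n135 p123.
have p024 := pos_comb_gt0 (c1 0 2 3 4 isT) p023 p034.
have p045 := pos_comb_gt0 (c3 0 3 4 5 isT) p034 p345.
have p035 := pos_comb_gt0 (c2 0 3 4 5 isT) p034 p345.
have p015 := pos_comb_gt0 (c1 0 1 3 5 isT) p013 p035.
have p025 := pos_comb_gt0 (c1 0 2 3 5 isT) p023 p035.
have p056 := pos_comb_gt0 (c3 0 3 5 6 isT) p035 p356.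
have p036 := pos_comb_gt0 (c2 0 3 5 6 isT) p035 p356.
have p046 := pos_comb_gt0 (c3 0 3 4 6 isT) p034 p346.
have p016 := pos_comb_gt0 (c1 0 1 3 6 isT) p013 p036.
have p026 := pos_comb_gt0 (c1 0 2 3 6 isT) p023 p036.
have p126 := pos_comb_gt0 (c2 1 2 3 6 isT) p123 p236.
have p136 := pos_comb_gt0 (c3 1 2 3 6 isT) p123 p236.
have p146 := pos_comb_gt0 (c4 1 3 4 6 isT) p136 p346.
have p156 := pos_comb_gt0 (c4 1 3 5 6 isT) p136 p356.
split; rewrite /= ?p013 ?p023 ?p014 ?p024 ?p034 ?p015 ?p025 ?p035 ?p045 ?p016 ?p026
  ?p036 ?p046 ?p056 ?p123 ?p126 ?p136 ?p146 ?p156 ?p236 ?p246 ?p256 ?p345 ?p346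
  ?p356 ?n012 ?n134 ?n135 ?n234 ?n235 ?n456 //.
Qed.

End Gprime.

Theorem lemma1 (R : realFieldType) (x y : nat -> R) :
  (forall i j : nat, (i < j)%N -> (j < 7)%N -> x i < x j) ->
  (exists eps : R, 0 < eps /\
     (eps <= - dx x 1 2 * y 0%N + dx x 0 2 * y 1%N - dx x 0 1 * y 2%N) /\
     (eps <= dx x 3 4 * y 0%N - dx x 0 4 * y 3%N + dx x 0 3 * y 4%N) /\
     (eps <= - dx x 3 5 * y 1%N + dx x 1 5 * y 3%N - dx x 1 3 * y 5%N) /\
     (eps <= dx x 3 6 * y 2%N - dx x 2 6 * y 3%N + dx x 2 3 * y 6%N) /\
     (eps <= dx x 5 6 * y 3%N - dx x 3 6 * y 5%N + dx x 3 5 * y 6%N) /\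
     (eps <= - dx x 5 6 * y 4%N + dx x 4 6 * y 5%N - dx x 4 5 * y 6%N)) ->
  forall i j : nat, (i < 7)%N -> (j < 7)%N ->
    (vis_edge 7 x y i j <-> Gprime_edge i j).
Proof.
move=> x_incr [eps [eps_gt0 [e1 [e2 [e3 [e4 [e5 e6]]]]]]].
have [pos neg] : all (orient_gt0 x y) Gprime_pos /\ all (orient_lt0 x y) Gprime_neg.
  by apply: Gprime_orient_signs => //; rewrite /orient; lra.
move=> i j; exact: (vis_edge_certified x_incr pos neg Gprime_certificate).
Qed.
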